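(* In the setting of the context, suppose the algorithm described there terminates after $N$ steps, i.e. $CB^{(N)}=0$. Then the returned matrix $B$ (consisting of the non-zero columns of $B^{(N)}$) has full column rank, and $\operatorname{image}B=\operatorname{nullspace}C$.
   Context: Multi-patch setting: $\Omega\subset\mathbb{R}^2$ is the union of closures of $K$ pairwise disjoint patches $\Omega_k=G_k((0,1)^2)$; on each patch there is a local basis $\Phi^{(k)}=(\phi_i^{(k)})_{i=1}^{n^{(k)}}$ obtained by mapping tensor-product B-splines (degree $p$, open knot vectors) via $G_k$. Any two patches sharing an edge $\Gamma_{k,\ell}=\partial\Omega_k\cap\partial\Omega_\ell$ (of positive length) have nested trace spaces; the closures of two patches intersect in the empty set, a vertex of at least one of them, or an edge of at least one of them; and any two patches meeting at a T-junction (a corner of a patch lying in the interior of an edge of another patch) share an edge. Let $n^{(pw)}=\sum_kn^{(k)}$ and index the concatenated coefficient vector $\underline u_h=(\underline u_h^{(1)},\ldots,\underline u_h^{(K)})\in\mathbb{R}^{n^{(pw)}}$. Constraint matrix $C$: for every pair of patches $\Omega_k,\Omega_\ell$ sharing an edge $\Gamma=\Gamma_{k,\ell}$ with $V_h^{(k)}|_\Gamma\subseteq V_h^{(\ell)}|_\Gamma$, and every $i$ with $\phi_i^{(k)}|_\Gamma\not\equiv0$, write $\phi_i^{(k)}=\sum_jE^{(k,\ell)}_{i,j}\phi_j^{(\ell)}$ on $\Gamma$ with nonnegative coefficients (from knot insertion, with row sums $\sum_jE^{(k,\ell)}_{i,j}=1$); then $C$ has a row representing the constraint $u_i^{(k)}-\sum_jE^{(k,\ell)}_{i,j}u_j^{(\ell)}=0$.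 (Constraints may be redundant.) For a matrix $D$ and row $m$ define $\mathcal F_m(D)=\{n: D_{m,n}\ne0,\ D_{m,n}D_{m,j}\le0\ \forall j\ne n\}$. Algorithm: set $B^{(0)}=I\in\mathbb{R}^{n^{(pw)}\times n^{(pw)}}$; for $\nu=1,2,\ldots$ until $CB^{(\nu)}=0$: choose $m_\nu,n_\nu$ with $n_\nu\in\mathcal F_{m_\nu}(CB^{(\nu-1)})$, set $R^{(\nu)}=I-\frac{1}{e_{m_\nu}^\top CB^{(\nu-1)}e_{n_\nu}}e_{n_\nu}e_{m_\nu}^\top CB^{(\nu-1)}$ and $B^{(\nu)}=B^{(\nu-1)}R^{(\nu)}$. Return $B$ consisting of the non-zero columns of $B^{(N)}$, where $N$ is the first index with $CB^{(N)}=0$. Here $e_j$ denotes the $j$-th unit vector. *)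

From mathcomp Require Import all_boot all_order all_algebra.
Set Implicit Arguments. Unset Strict Implicit. Unset Printing Implicit Defensive.
Import Order.TTheory GRing.Theory Num.Theory.
Local Open Scope ring_scope.

Section Defs.
Variable R : realFieldType.

(* Algebraic shape of a row of the constraint matrix C (dofs indexed by 'I_n,
   [patch] assigns each global dof index to its patch in 'I_K):
   row m encodes  u_a - \sum_j E_{a,j} u_j = 0  with dof a in patch k,
   all j with E_{a,j} <> 0 in one patch l <> k, E_{a,j} >= 0, \sum_j E_{a,j} = 1. *)
Definition constraint_row (K n r : nat) (patch : 'I_n -> 'I_K)
    (C : 'M[R]_(r, n)) (m : 'I_r) : Prop :=
  exists (a : 'I_n) (l : 'I_K),
    [/\ patch a != l, C m a = 1,
        (forall j, j != a -> C m j <= 0),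
        (forall j, j != a -> C m j != 0 -> patch j = l)
      & \sum_(j < n) C m j = 0].

Definition constraint_matrix (K n r : nat) (patch : 'I_n -> 'I_K)
    (C : 'M[R]_(r, n)) : Prop :=
  forall m, constraint_row patch C m.

Definition Fset (r n : nat) (D : 'M[R]_(r, n)) (m : 'I_r) (j : 'I_n) : bool :=
  (D m j != 0) && [forall j' : 'I_n, (j' != j) ==> (D m j * D m j' <= 0)].

Definition Rstep (r n : nat) (D : 'M[R]_(r, n)) (m : 'I_r) (j : 'I_n)
    : 'M[R]_n :=
  1%:M - (D m j)^-1 *: (delta_mx j m *m D).

(* B^(nu) of the algorithm, with (ms nu, ns nu) the pivot chosen at step nu+1 *)
Fixpoint Biter (r n : nat) (C : 'M[R]_(r, n)) (ms : nat -> 'I_r)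
    (ns : nat -> 'I_n) (nu : nat) : 'M[R]_n :=
  match nu with
  | 0 => 1%:M
  | nu'.+1 => let B := Biter C ms ns nu' in B *m Rstep (C *m B) (ms nu') (ns nu')
  end.

Definition nzcols (n p : nat) (M : 'M[R]_(n, p)) : {set 'I_p} :=
  [set j : 'I_p | col j M != 0].

Definition nzcol_mx (n p : nat) (M : 'M[R]_(n, p)) : 'M[R]_(n, #|nzcols M|) :=
  \matrix_(i < n, k < #|nzcols M|) M i (enum_val k).

End Defs.

From mathcomp Require Import all_boot all_order all_algebra.
Import Order.TTheory GRing.Theory Num.Theory.
Local Open Scope ring_scope.
Set Implicit Arguments. Unset Strict Implicit. Unset Printing Implicit Defensive.

(* Invariant: the entries of B^(nu) in rows and columns indexed by its nonzero
   columns form an identity matrix. A step with pivot (m, j) subtracts multiples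
   of column j, whose entries at the other surviving indices vanish, and it
   annihilates column j itself; no zero column ever becomes nonzero. So the
   nonzero columns of B^(N) contain an identity submatrix and are independent.
   Moreover, if C u = 0 then inductively C B^(nu) u = C u = 0, so R^(nu+1)
   fixes u and B^(N) u = u lies in the image of B; conversely C B^(N) = 0. *)

Section NonzeroColumns.
Variables (R : realFieldType) (n p : nat) (M : 'M[R]_(n, p)).

Lemma notin_nzcols_entry k i : k \notin nzcols M -> M i k = 0.
Proof. by rewrite inE negbK => /eqP/matrixP/(_ i 0); rewrite !mxE. Qed.

Definition nzcol_sel : 'M[R]_(p, #|nzcols M|) :=
  \matrix_(j, k) (j == enum_val k)%:R.

Lemma nzcol_mxE : nzcol_mx M = M *m nzcol_sel.
Proof.
apply/matrixP => i k; rewrite !mxE (bigD1 (enum_val k)) //= big1.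
  by rewrite !mxE eqxx mulr1 addr0.
by move=> j /negbTE nj; rewrite !mxE nj mulr0.
Qed.

Lemma mulmx_nzcol_mx (u : 'cV[R]_p) :
  M *m u = nzcol_mx M *m \col_k u (enum_val k) 0.
Proof.
apply/matrixP => i z; rewrite (ord1 z) !mxE (bigID (fun j => j \in nzcols M)) /=.
rewrite [X in _ + X]big1 ?addr0; last first.
  by move=> j jM; rewrite (notin_nzcols_entry i jM) mul0r.
by rewrite big_enum_val /=; apply: eq_bigr => k _; rewrite !mxE.
Qed.

End NonzeroColumns.

Definition identity_on_nzcols (R : realFieldType) (n : nat) (M : 'M[R]_n) :=
  {in nzcols M &, forall k k', M k' k = (k' == k)%:R}.

Lemma rank_nzcol_mx (R : realFieldType) (n : nat) (M : 'M[R]_n) :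
  identity_on_nzcols M -> \rank (nzcol_mx M) = #|nzcols M|.
Proof.
move=> idM; have selM : (nzcol_sel M)^T *m nzcol_mx M = 1%:M.
  apply/matrixP => k' k; rewrite !mxE (bigD1 (enum_val k')) //= big1.
    rewrite !mxE eqxx mul1r addr0 idM ?enum_valP //.
    by rewrite (inj_eq enum_val_inj).
  by move=> j /negbTE nj; rewrite !mxE nj mul0r.
apply/eqP; rewrite eqn_leq rank_leq_col /=.
by rewrite -{1}(mxrank1 R #|nzcols M|) -selM mxrankM_maxr.
Qed.

Section Elimination.
Variables (R : realFieldType) (r n : nat) (C : 'M[R]_(r, n)).

Lemma Rstep_entry (B : 'M[R]_n) (D : 'M[R]_(r, n)) m j i k :
  (B *m Rstep D m j) i k = B i k - (D m j)^-1 * B i j * D m k.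
Proof.
rewrite /Rstep mulmxBr mulmx1 -scalemxAr mulmxA.
have -> : B *m delta_mx j m = col j B *m delta_mx 0 m.
  by rewrite colE -mulmxA mul_delta_mx.
by rewrite -mulmxA -rowE !mxE big_ord1 !mxE mulrA.
Qed.

Lemma mulmx_notin_nzcols (B : 'M[R]_n) m k :
  k \notin nzcols B -> (C *m B) m k = 0.
Proof.
by move=> kB; rewrite mxE big1 // => i _; rewrite (notin_nzcols_entry i kB) mulr0.
Qed.

Lemma pivot_in_nzcols (B : 'M[R]_n) m j : (C *m B) m j != 0 -> j \in nzcols B.
Proof. by apply: contraR => /(mulmx_notin_nzcols m)->. Qed.

Lemma nzcols_Rstep (B : 'M[R]_n) m j : (C *m B) m j != 0 ->
  nzcols (B *m Rstep (C *m B) m j) \subset nzcols B :\ j.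
Proof.
move=> Dmj; apply/subsetP => k; apply: contraTT.
rewrite in_setD1 negb_and negbK => jkB; rewrite inE negbK.
apply/eqP/matrixP => i z; rewrite [LHS]mxE [RHS]mxE Rstep_entry.
case/orP: jkB => [/eqP-> | kB]; first by rewrite mulrAC mulVf // mul1r subrr.
by rewrite (mulmx_notin_nzcols m kB) mulr0 subr0 (notin_nzcols_entry i kB).
Qed.

Lemma identity_on_nzcols_Rstep (B : 'M[R]_n) m j : (C *m B) m j != 0 ->
  identity_on_nzcols B -> identity_on_nzcols (B *m Rstep (C *m B) m j).
Proof.
move=> Dmj idB k k' /(subsetP (nzcols_Rstep Dmj)) kB.
move=> /(subsetP (nzcols_Rstep Dmj)) k'B.
move: kB k'B; rewrite !in_setD1 => /andP[_ kB] /andP[k'j k'B].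
rewrite Rstep_entry (idB j k') ?(pivot_in_nzcols Dmj) // (negbTE k'j).
by rewrite mulr0 mul0r subr0 idB.
Qed.

Lemma Biter_fix_kernel ms ns (u : 'cV[R]_n) nu :
  C *m u = 0 -> Biter C ms ns nu *m u = u.
Proof.
move=> Cu; elim: nu => [|nu IH] /=; first by rewrite mul1mx.
rewrite -mulmxA /Rstep mulmxBl mul1mx -scalemxAl -!mulmxA IH Cu.
by rewrite mulmx0 scaler0 subr0 IH.
Qed.

Lemma identity_on_nzcols_Biter ms ns N :
  (forall nu, (nu < N)%N -> (C *m Biter C ms ns nu) (ms nu) (ns nu) != 0) ->
  identity_on_nzcols (Biter C ms ns N).
Proof.
elim: N => [|N IH] pivots /=; first by move=> k k' _ _; rewrite mxE.
apply: identity_on_nzcols_Rstep; first exact: pivots.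
by apply: IH => nu /ltnW; apply: pivots.
Qed.

End Elimination.

Theorem mainTheorem4 (R : realFieldType) (K n r : nat) (patch : 'I_n -> 'I_K)
    (C : 'M[R]_(r, n)) (ms : nat -> 'I_r) (ns : nat -> 'I_n) (N : nat) :
  constraint_matrix patch C ->
  (* pivot choices n_nu \in F_{m_nu}(C B^(nu-1)) for nu = 1..N *)
  (forall nu, (nu < N)%N -> Fset (C *m Biter C ms ns nu) (ms nu) (ns nu)) ->
  (* the algorithm has not stopped before step N *)
  (forall nu, (nu < N)%N -> C *m Biter C ms ns nu != 0) ->
  (* ... and stops at step N *)
  C *m Biter C ms ns N = 0 ->
  let B := nzcol_mx (Biter C ms ns N) in
  \rank B = #|nzcols (Biter C ms ns N)| /\
  (forall u : 'cV[R]_n, C *m u = 0 <-> exists x, u = B *m x).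
Proof.
move=> _ pivots _ CBN B.
have idBN : identity_on_nzcols (Biter C ms ns N).
  by apply: identity_on_nzcols_Biter => nu /pivots /andP[].
split; first exact: rank_nzcol_mx.
move=> u; split=> [Cu | [x ->]].
  by exists (\col_k u (enum_val k) 0); rewrite /B -mulmx_nzcol_mx Biter_fix_kernel.
by rewrite /B nzcol_mxE !mulmxA CBN !mul0mx.
Qed.
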